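(* Let $p$ be an odd prime. A metric $p$-group $(A,q)$ is reductive if and only if it is either isotropically generated or anisotropic.
   Context: $k$ is algebraically closed of characteristic $0$. A metric group $(A,q)$ is a finite Abelian group with a non-degenerate quadratic form $q:A\to k^\times$; a metric $p$-group if $A$ is a $p$-group. $x$ is isotropic if $q(x)=1$, a subgroup $H$ is isotropic if $q|_H=1$; $(A,q)$ is isotropically generated if $A$ is generated by isotropic elements; anisotropic if $q(x)\ne1$ for $x\ne0$; reductive if the intersection of its maximal isotropic subgroups is trivial. *)

From HB Require Import structures.
From mathcomp Require Import all_boot all_order all_algebra all_fingroup all_solvable.
Set Implicit Arguments. Unset Strict Implicit. Unset Printing Implicit Defensive.
Import GRing.Theory.

(* A finite abelian group is modelled as a subgroup A of a finGroupType gT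
   (written multiplicatively), and q : gT -> k, only its values on A matter. *)

Local Open Scope ring_scope.

Definition bichar (gT : finGroupType) (k : fieldType) (q : gT -> k) (x y : gT) : k :=
  q (x * y)%g / (q x * q y).

(* q : A -> k^x is a quadratic form: nonzero values, q(x^-1) = q(x),
   and b is a bicharacter (multiplicative in each variable; it is symmetric
   as A is abelian). *)
Definition quadratic_form (gT : finGroupType) (k : fieldType)
  (A : {group gT}) (q : gT -> k) : Prop :=
  [/\ {in A, forall x, q x != 0%R},
      {in A, forall x, q (x^-1)%g = q x},
      {in A & A & A, forall x y z, bichar q (x * y)%g z = (bichar q x z * bichar q y z)%R} &
      {in A & A & A, forall x y z, bichar q x (y * z)%g = (bichar q x y * bichar q x z)%R}].

Definition nondegenerate (gT : finGroupType) (k : fieldType)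
  (A : {group gT}) (q : gT -> k) : Prop :=
  {in A, forall x, {in A, forall y, bichar q x y = 1%R} -> x = 1%g}.

Definition metric_group (gT : finGroupType) (k : fieldType)
  (A : {group gT}) (q : gT -> k) : Prop :=
  [/\ abelian A, quadratic_form A q & nondegenerate A q].

Definition isotropic_subgroup (gT : finGroupType) (k : fieldType)
  (A : {group gT}) (q : gT -> k) (H : {group gT}) : bool :=
  (H \subset A) && [forall x in H, q x == 1%R].

Definition reductive (gT : finGroupType) (k : fieldType)
  (A : {group gT}) (q : gT -> k) : Prop :=
  \bigcap_(H : {group gT} | maxgroup H (isotropic_subgroup A q)) (H : {set gT}) = 1%g.

Definition isotropically_generated (gT : finGroupType) (k : fieldType)
  (A : {group gT}) (q : gT -> k) : Prop :=
  <<[set x in A | q x == 1%R]>>%g = A.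

Definition anisotropic (gT : finGroupType) (k : fieldType)
  (A : {group gT}) (q : gT -> k) : Prop :=
  {in A, forall x, q x = 1%R -> x = 1%g}.

From Pilot Require Import Defs.
From HB Require Import structures.
From mathcomp Require Import all_boot all_order all_algebra all_fingroup all_solvable.
From mathcomp Require Import zify.
Set Implicit Arguments. Unset Strict Implicit. Unset Printing Implicit Defensive.
Import GRing.Theory.
Local Open Scope ring_scope.

(* Let B be the subgroup generated by the isotropic elements.  An
   isotropic z orthogonal to every isotropic element can be adjoined to any
   maximal isotropic subgroup, so reductivity says exactly that such z are
   trivial; since q z ^+ 2 = b z z and A has odd order, this also makes b
   nondegenerate on B.  If A is not anisotropic, some isotropic x of order p
   and isotropic y give a primitive p-th root b y x, so q takes every p-th root
   of unity on B and #|B| is invertible in k.  Character sums over B then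
   give A = B * B^perp.  Reductivity forces B^perp to have exponent p, so for
   c in B^perp the value q c is a p-th root of unity, q (c * u) = 1 for some
   u in B, and c lies in B.  Conversely, elements common to all maximal
   isotropic subgroups are orthogonal to every isotropic element, hence
   trivial when A is isotropically generated and b nondegenerate. *)

Lemma sum_neq0_mulmorph_eq1 (k : fieldType) (gT : finGroupType) (G : {group gT})
    (psi : gT -> k) :
  {in G &, {morph psi : x y / (x * y)%g >-> x * y}} ->
  \sum_(u in G) psi u != 0 -> {in G, forall w, psi w = 1}.
Proof.
move=> psiM sum_neq0 w wG; apply: (mulIf sum_neq0); rewrite mul1r mulr_sumr.
rewrite [RHS](reindex_inj (mulgI w)) /=.
by apply: eq_big => [u | u uG]; rewrite ?groupMl ?psiM.
Qed.

Lemma prime_prim_root (R : nzRingType) (p : nat) (z : R) :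
  prime p -> z ^+ p = 1 -> z != 1 -> p.-primitive_root z.
Proof.
move=> p_pr zp z_neq1.
have [m mz /(primeP p_pr).2/pred2P[m1 | <- //]] := prim_order_exists (prime_gt0 p_pr) zp.
by move: z_neq1; rewrite -(prim_expr_order mz) m1 expr1 eqxx.
Qed.

Section QuadraticForm.
Variables (k : fieldType) (gT : finGroupType) (A : {group gT}) (q : gT -> k).
Hypothesis abelA : abelian A.
Hypothesis qA : quadratic_form A q.
Local Notation b := (bichar q).

Lemma q_neq0 x : x \in A -> q x != 0.
Proof. by case: qA => h _ _ _; apply: h. Qed.

Lemma qV x : x \in A -> q x^-1 = q x.
Proof. by case: qA => _ h _ _; apply: h. Qed.

Lemma bicharMl x y z : x \in A -> y \in A -> z \in A -> b (x * y) z = b x z * b y z.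
Proof. by case: qA => _ _ h _; apply: h. Qed.

Lemma bicharMr x y z : x \in A -> y \in A -> z \in A -> b x (y * z) = b x y * b x z.
Proof. by case: qA => _ _ _ h; apply: h. Qed.

Lemma bichar_neq0 x y : x \in A -> y \in A -> b x y != 0.
Proof. by move=> xA yA; rewrite mulf_neq0 ?invr_eq0 ?mulf_neq0 ?q_neq0 ?groupM. Qed.

Lemma qM x y : x \in A -> y \in A -> q (x * y) = q x * q y * b x y.
Proof. by move=> xA yA; rewrite mulrC divfK // mulf_neq0 ?q_neq0. Qed.

Lemma bichar1l y : y \in A -> b 1 y = 1.
Proof.
move=> yA; apply: (mulfI (bichar_neq0 (group1 A) yA)).
by rewrite mulr1 -bicharMl ?mulg1.
Qed.

Lemma bichar1r x : x \in A -> b x 1 = 1.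
Proof.
move=> xA; apply: (mulfI (bichar_neq0 xA (group1 A))).
by rewrite mulr1 -bicharMr ?mulg1.
Qed.

Lemma q1 : q 1 = 1.
Proof.
have := bichar1l (group1 A).
by rewrite /bichar mulg1 invfM mulrA divff ?q_neq0 // mul1r => /eqP; rewrite invr_eq1 => /eqP.
Qed.

Lemma bicharC x y : x \in A -> y \in A -> b x y = b y x.
Proof.
by move=> xA yA; rewrite /bichar (centsP abelA x xA y yA) (mulrC (q x)).
Qed.

Lemma bicharXl x y n : x \in A -> y \in A -> b (x ^+ n) y = b x y ^+ n.
Proof.
move=> xA yA; elim: n => [|n IHn]; first by rewrite bichar1l.
by rewrite expgS bicharMl ?groupX // IHn exprS.
Qed.

Lemma bicharXr x y n : x \in A -> y \in A -> b x (y ^+ n) = b x y ^+ n.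
Proof.
move=> xA yA; elim: n => [|n IHn]; first by rewrite bichar1r.
by rewrite expgS bicharMr ?groupX // IHn exprS.
Qed.

Lemma bichar_diag x : x \in A -> b x x = q x ^+ 2.
Proof.
move=> xA; have qx2_neq0 : q x ^+ 2 != 0 by rewrite expf_neq0 ?q_neq0.
have : b x x * b x x^-1 = 1 by rewrite -bicharMr ?groupV // mulgV bichar1r.
by rewrite {2}/bichar mulgV q1 qV // mul1r -expr2 => /(canRL (divfK qx2_neq0)); rewrite mul1r.
Qed.

Lemma qX x n : x \in A -> q (x ^+ n) = q x ^+ (n * n).
Proof.
move=> xA; elim: n => [|n IHn]; first by rewrite q1.
rewrite expgSr qM ?groupX // IHn bicharXl // bichar_diag // -exprM -exprSr -exprD.
by congr (_ ^+ _); lia.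
Qed.

Lemma q_expg_eq1 x n : x \in A -> odd n -> (x ^+ n = 1)%g -> q x ^+ n = 1.
Proof.
move=> xA odd_n xn1.
have qxnn : q x ^+ (n * n) = 1 by rewrite -qX // xn1 q1.
have qx2n : q x ^+ (2 * n) = 1 by rewrite exprM -bichar_diag // -bicharXl // xn1 bichar1l.
have e : (n * n = n + 2 * n * n./2)%N.
  by have := odd_double_half n; rewrite odd_n; lia.
by rewrite -qxnn e exprD exprM qx2n expr1n mulr1.
Qed.

Lemma q_eq1_sqr x : x \in A -> odd #[x]%g -> q x ^+ 2 = 1 -> q x = 1.
Proof.
move=> xA odd_x qx2; have := q_expg_eq1 xA odd_x (expg_order x).
by rewrite -(odd_double_half #[x]%g) odd_x exprD expr1 -mul2n exprM qx2 expr1n mulr1.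
Qed.

Lemma bicharVr x y : x \in A -> y \in A -> b x y^-1 = (b x y)^-1.
Proof.
move=> xA yA; apply: (mulIf (bichar_neq0 xA yA)).
by rewrite mulVf ?bichar_neq0 // -bicharMr ?groupV // mulVg bichar1r.
Qed.

Lemma bichar_eq1_gen (S : {set gT}) z : z \in A -> S \subset A ->
  {in S, forall y, b y z = 1} -> {in <<S>>%g, forall y, b y z = 1}.
Proof.
move=> zA sSA Sz.
have perp_z : group_set [set y in A | b y z == 1].
  apply/group_setP; split=> [|x y]; first by rewrite inE group1 bichar1l ?eqxx.
  rewrite !inE => /andP[xA /eqP xz] /andP[yA /eqP yz].
  by rewrite groupM // bicharMl // xz yz mulr1 eqxx.
have /subsetP sub : (<<S>> \subset Group perp_z)%g.
  by rewrite gen_subG; apply/subsetP => y yS; rewrite inE (subsetP sSA) // Sz ?eqxx.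
by move=> y /sub; rewrite inE => /andP[_ /eqP].
Qed.

Lemma isotropic_subgroupP (H : {group gT}) :
  reflect (H \subset A /\ {in H, forall x, q x = 1}) (isotropic_subgroup A q H).
Proof.
apply: (iffP andP) => [[sHA /forall_inP qH] | [sHA qH]]; split=> //.
  by move=> x /qH/eqP.
by apply/forall_inP => x /qH ->.
Qed.

Lemma isotropic_cycle x : x \in A -> q x = 1 -> isotropic_subgroup A q <[x]>%G.
Proof.
move=> xA qx; apply/isotropic_subgroupP; split; first by rewrite cycle_subG.
by move=> _ /cycleP[i ->]; rewrite qX // qx expr1n.
Qed.

Lemma reductiveP : reductive A q <->
  (forall z, (forall L : {group gT}, maxgroup L (isotropic_subgroup A q) -> z \in L) ->
   z = 1%g).
Proof.
rewrite /reductive; split=> [red z zL | triv].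
  by apply/set1gP; rewrite -red; apply/bigcapP => L; apply: zL.
apply/eqP; rewrite eqEsubset sub1G andbT; apply/subsetP => z /bigcapP zL.
by rewrite (triv z zL) group1.
Qed.

Local Notation isotropics := [set x in A | q x == 1].

Lemma isotropics_sub : isotropics \subset A.
Proof. by apply/subsetP => x /setIdP[]. Qed.

Lemma mem_max_isotropic z (L : {group gT}) :
  z \in A -> q z = 1 -> {in isotropics, forall x, b x z = 1} ->
  maxgroup L (isotropic_subgroup A q) -> z \in L.
Proof.
move=> zA qz z_perp maxL; have [/isotropic_subgroupP[sLA qL] maxL'] := maxgroupP maxL.
have cLz : (<[z]> \subset 'C(L))%g by apply: sub_abelian_cent2 abelA _ sLA; rewrite cycle_subG.
have iso_Lz : isotropic_subgroup A q (L <*> <[z]>)%G.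
  apply/isotropic_subgroupP; split; first by rewrite join_subG sLA cycle_subG.
  move=> y /=; rewrite cent_joinEr // => /mulsgP[l _ lL /cycleP[i ->] ->].
  have lA := subsetP sLA l lL; have lI : l \in isotropics by rewrite inE lA qL ?eqxx.
  by rewrite qM ?groupX // qL // qX // qz bicharXr // z_perp // !expr1n !mul1r.
by rewrite -(maxL' _ iso_Lz (joing_subl _ _)) (subsetP (joing_subr _ _)) ?cycle_id.
Qed.

Lemma bichar_eq1_max_isotropic z :
  (forall L : {group gT}, maxgroup L (isotropic_subgroup A q) -> z \in L) ->
  {in isotropics, forall x, b x z = 1}.
Proof.
move=> zL x; rewrite inE => /andP[xA /eqP qx].
have [L maxL sxL] := maxgroup_exists (isotropic_cycle xA qx).
have [/isotropic_subgroupP[_ qL] _] := maxgroupP maxL.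
have xL := subsetP sxL x (cycle_id x).
by rewrite /bichar !qL ?groupM ?zL // mulr1 invr1 mulr1.
Qed.

Lemma isotropically_generated_reductive :
  Defs.nondegenerate A q -> isotropically_generated A q -> reductive A q.
Proof.
move=> nondeg gen; apply/reductiveP => z zL.
have [L maxL _] := maxgroup_exists (isotropic_cycle (group1 A) q1).
have [/isotropic_subgroupP[sLA _] _] := maxgroupP maxL.
have zA := subsetP sLA z (zL L maxL).
apply: (nondeg _ zA) => y yA; rewrite bicharC //.
by apply: (bichar_eq1_gen zA isotropics_sub (bichar_eq1_max_isotropic zL)); rewrite gen.
Qed.

Lemma anisotropic_reductive : anisotropic A q -> reductive A q.
Proof.
move=> aniso; apply/reductiveP => z zL.
have [L maxL _] := maxgroup_exists (isotropic_cycle (group1 A) q1).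
have [/isotropic_subgroupP[sLA qL] _] := maxgroupP maxL.
by have zLz := zL L maxL; apply: aniso (subsetP sLA z zLz) (qL z zLz).
Qed.

Lemma reductive_isotropic_perp z : reductive A q ->
  z \in A -> q z = 1 -> {in isotropics, forall x, b x z = 1} -> z = 1%g.
Proof. by move=> /reductiveP red zA qz z_perp; apply: red => L; apply: mem_max_isotropic. Qed.

Lemma reductive_radical_trivial : reductive A q -> odd #|A| ->
  {in <<isotropics>>%g, forall z, {in <<isotropics>>%g, forall u, b u z = 1} -> z = 1%g}.
Proof.
move=> red oddA z zI z_perp.
have zA : z \in A by apply: subsetP zI; rewrite gen_subG isotropics_sub.
have qz : q z = 1.
  apply: (q_eq1_sqr zA (dvdn_odd (order_dvdG zA) oddA)).
  by rewrite -bichar_diag //; apply: z_perp.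
by apply: reductive_isotropic_perp => // x xI; apply/z_perp/mem_gen.
Qed.

Lemma perp_decomposition (B : {group gT}) a : B \subset A -> (#|B|%:R : k) != 0 ->
    {in B, forall z, {in B, forall u, b u z = 1} -> z = 1%g} -> a \in A ->
  exists2 v, v \in B & {in B, forall u, b u (v^-1 * a)%g = 1}.
Proof.
move=> /subsetP sBA B_char B_rad aA.
pose S v := \sum_(u in B) b u a / b u v.
have S_mult v : v \in B ->
    {in B &, {morph (fun u => b u a / b u v) : x y / (x * y)%g >-> x * y}}.
  move=> /sBA vA x y /sBA xA /sBA yA /=.
  by rewrite !bicharMl // invfM mulrACA.
have sumS : \sum_(v in B) S v = #|B|%:R.
  rewrite exchange_big (bigD1 1%g) //= [X in _ + X]big1 ?addr0 => [|u /andP[uB u_neq1]].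
    rewrite (eq_bigr (fun _ => 1)) ?sumr_const // => v vB.
    by rewrite !bichar1l ?(sBA v) // divr1.
  rewrite -mulr_sumr; suff /eqP-> : \sum_(v in B) (b u v)^-1 == 0 by rewrite mulr0.
  apply: contraNT u_neq1 => sum_neq0; apply/eqP/B_rad => // v vB.
  have inv_mult : {in B &, {morph (fun v => (b u v)^-1) : x y / (x * y)%g >-> x * y}}.
    by move=> x y /sBA xA /sBA yA; rewrite bicharMr ?(sBA u) // invfM.
  have /eqP := sum_neq0_mulmorph_eq1 inv_mult sum_neq0 vB.
  by rewrite invr_eq1 bicharC ?sBA // => /eqP.
have [v vB Sv_neq0] : exists2 v, v \in B & S v != 0.
  apply/exists_inP; apply: contraR B_char => /exists_inPn S0.
  by rewrite -sumS big1 // => v /S0/negPn/eqP.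
exists v => // u uB; have /= := sum_neq0_mulmorph_eq1 (S_mult v vB) Sv_neq0 uB.
have [uA vA] := (sBA u uB, sBA v vB).
by rewrite bicharMr ?groupV // bicharVr // mulrC.
Qed.

Lemma q_gen_isotropics_onto_roots n x y w :
    x \in isotropics -> y \in isotropics -> n.-primitive_root (b x y) -> w ^+ n = 1 ->
  exists2 u, u \in <<isotropics>>%g & q u = w.
Proof.
move=> xI yI prim_xy wn; have [i ->] := prim_rootP prim_xy wn.
move: (xI) (yI); rewrite !inE => /andP[xA /eqP qx] /andP[yA /eqP qy].
exists (x ^+ i * y)%g; first by rewrite groupM ?groupX ?mem_gen.
by rewrite qM ?groupX // qX // qx qy bicharXl // expr1n !mul1r.
Qed.

Section OddPrimeGroup.
Variable p : nat.
Hypotheses (p_pr : prime p) (p_odd : odd p) (pA : (p.-group A)%g).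

Lemma reductive_prim_root x : reductive A q -> x \in A -> q x = 1 -> x != 1%g ->
  exists2 x1, x1 \in isotropics & exists2 y, y \in isotropics & p.-primitive_root (b y x1).
Proof.
move=> red xA qx x_neq1.
have := pgroup_pdiv (mem_p_elt pA xA); rewrite cycle_eq1 => /(_ x_neq1)[_ p_dvd_x _].
have [_ /cycleP[i ->] ox1] := Cauchy p_pr p_dvd_x.
have x1I : (x ^+ i)%g \in isotropics by rewrite inE groupX // qX // qx expr1n eqxx.
exists (x ^+ i)%g => //.
have [y yI y_x1] : exists2 y, y \in isotropics & b y (x ^+ i) != 1.
  apply/exists_inP; apply: contraLR (prime_gt1 p_pr) => /exists_inPn perp.
  rewrite -ox1; suff -> : (x ^+ i = 1)%g by rewrite order1.
  apply: reductive_isotropic_perp; rewrite ?groupX ?qX ?qx ?expr1n //.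
  by move=> y /perp/negPn/eqP.
exists y => //; apply: prime_prim_root => //.
have yA := subsetP isotropics_sub y yI.
by rewrite -bicharXr ?groupX // -ox1 expg_order bichar1r.
Qed.

Lemma reductive_perp_expg_prime c : reductive A q -> c \in A ->
  {in isotropics, forall x, b x c = 1} -> (c ^+ p = 1)%g.
Proof.
move=> red cA c_perp; apply/eqP; rewrite -order_dvdn.
have p_gt1 := prime_gt1 p_pr.
have [n oc] := p_natP (mem_p_elt pA cA).
rewrite oc; case: n oc => [|[|n]] oc; rewrite ?dvd1n ?expn1 ?dvdnn //.
have qcp : q c ^+ (p ^ n.+2) = 1.
  by rewrite -oc q_expg_eq1 ?expg_order // oc oddX p_odd orbT.
have w1 : (c ^+ (p ^ n.+1) = 1)%g.
  apply: reductive_isotropic_perp => //; first exact: groupX.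
    rewrite qX //; have /dvdnP[m ->] : (p ^ n.+2 %| p ^ n.+1 * p ^ n.+1)%N.
      by rewrite -expnD dvdn_exp2l //; lia.
    by rewrite mulnC exprM qcp expr1n.
  by move=> x xI; rewrite bicharXr ?c_perp ?expr1n // (subsetP isotropics_sub).
by have := order_dvdn c (p ^ n.+1); rewrite w1 eqxx oc dvdn_Pexp2l // ltnn.
Qed.

Lemma reductive_isotropically_generated x : reductive A q ->
  x \in A -> q x = 1 -> x != 1%g -> isotropically_generated A q.
Proof.
move=> red xA qx x_neq1.
have [x1 x1I [y yI prim_yx1]] := reductive_prim_root red xA qx x_neq1.
have sBA : (<<isotropics>> \subset A)%g by rewrite gen_subG isotropics_sub.
have oddA : odd #|A| by have [n ->] := p_natP pA; rewrite oddX p_odd orbT.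
have B_char : (#|<<isotropics>>%g|%:R : k) != 0.
  have [n ->] := p_natP (pgroupS sBA pA).
  by rewrite natrX expf_neq0 // (prim_root_natf_neq0 prim_yx1).
apply/eqP; rewrite eqEsubset sBA; apply/subsetP => a aA.
have [v vB c_perp] := perp_decomposition sBA B_char (reductive_radical_trivial red oddA) aA.
set c := (v^-1 * a)%g.
have cA : c \in A by rewrite groupM ?groupV // (subsetP sBA).
have [u uB qu] : exists2 u, u \in <<isotropics>>%g & q u = (q c)^-1.
  apply: (q_gen_isotropics_onto_roots yI x1I prim_yx1).
  have cp := reductive_perp_expg_prime red cA (fun x xI => c_perp x (mem_gen xI)).
  by rewrite exprVn q_expg_eq1 ?invr1.
have uA := subsetP sBA u uB.
have cuB : (c * u)%g \in <<isotropics>>%g.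
  by rewrite mem_gen // inE groupM //= qM // qu bicharC // c_perp // mulr1 mulfV ?q_neq0.
by rewrite -(mulKVg v a) groupM // -(groupMr c uB).
Qed.

End OddPrimeGroup.

End QuadraticForm.

Theorem proposition6p7 (k : closedFieldType) (hk : [pchar k]%R =i pred0)
  (p : nat) (hp : prime p) (hodd : odd p)
  (gT : finGroupType) (A : {group gT}) (q : gT -> k)
  (hmet : metric_group A q) (hpA : (p.-group A)%g) :
  reductive A q <-> isotropically_generated A q \/ anisotropic A q.
Proof.
case: hmet => abelA qA nondeg; split=> [red | [gen | aniso]].
- case: (boolP [exists x in A, (q x == 1) && (x != 1%g)]) =>
      [/exists_inP[x xA /andP[/eqP qx x_neq1]] | /exists_inPn no_iso].
    by left; apply: (reductive_isotropically_generated abelA qA hp hodd hpA red xA qx).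
  by right=> x xA qx; apply/eqP; have := no_iso x xA; rewrite qx eqxx negbK.
- exact: isotropically_generated_reductive.
- exact: anisotropic_reductive.
Qed.
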